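(* Let $n\in\mathbb{N}$, $1<p<q$, and $0<\omega<\omega_{p,q}$, where $$\omega_{p,q}=\frac{2(q-p)}{(p+1)(q-1)}\left[\frac{(p-1)(q+1)}{(p+1)(q-1)}\right]^{\frac{p-1}{q-p}}.$$ Let $f(u)=-\omega u+u^p-u^q$, $F(u)=\int_0^u f(s)\,ds=-\frac{\omega}{2}u^2+\frac{u^{p+1}}{p+1}-\frac{u^{q+1}}{q+1}$, and $$\Sigma(u)=2nF(u)-(n-2)uf(u)\qquad (u\ge 0).$$ Then there exist $0<B<C\le\infty$ (depending on $\omega,p,q$ and $n$) such that $\Sigma(u)<0$ for all $u\in(0,B)$ and $\Sigma(u)>0$ for all $u\in(B,C)$.
   Context: Throughout, $\omega_{p,q}$ is the threshold such that $F(u)>0$ for some $u>0$ if and only if $\omega<\omega_{p,q}$. *)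

From Stdlib Require Import Reals.
Open Scope R_scope.

Definition omega_pq (p q : R) : R :=
  2 * (q - p) / ((p + 1) * (q - 1)) *
  Rpower (((p - 1) * (q + 1)) / ((p + 1) * (q - 1))) ((p - 1) / (q - p)).

(* f(u) = -omega u + u^p - u^q  (real exponents; only used for u > 0) *)
Definition f_nl (omega p q u : R) : R :=
  - omega * u + Rpower u p - Rpower u q.

Definition F_nl (omega p q u : R) : R :=
  - omega / 2 * u ^ 2 + Rpower u (p + 1) / (p + 1) - Rpower u (q + 1) / (q + 1).

Definition Sigma (n : nat) (omega p q u : R) : R :=
  2 * INR n * F_nl omega p q u - (INR n - 2) * u * f_nl omega p q u.

(* Writing a = 2n/(p+1) - (n-2) and b = 2n/(q+1) - (n-2), one has
     Sigma(u) = -2 omega u^2 + a u^(p+1) - b u^(q+1) = u^(q+1) Phi(u),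
     Phi(u)   = -2 omega u^(1-q) + a u^(p-q) - b = u^(1-q) G(u),
     G(u)     = -2 omega + a u^(p-1) - b u^(q-1),
   so Sigma, Phi and G have the same sign on (0, oo).  The proof shows:
   - G is negative near 0, and G(u0) > 0 at u0 = K^(1/(q-p)),
     K = (p-1)(q+1)/((p+1)(q-1)); the latter is exactly omega < omega_{p,q};
   - Phi'(u) = u^(-q) (2 omega (q-1) - a (q-p) u^(p-1)), so Phi increases
     and then (if a > 0) decreases; hence Phi increases strictly on some
     (0, c] with Phi(c) > 0;
   - a strictly increasing continuous function crossing 0 has a single
     sign change B (intermediate value theorem).
   The theorem follows with B that crossing point and C = c. *)

From Stdlib Require Import Reals Ranalysis5 Lra.
Open Scope R_scope.

Lemma increasing_sign_change (h : R -> R) (x0 c : R) :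
  0 < x0 -> x0 < c -> h x0 < 0 -> 0 < h c ->
  (forall t, x0 <= t <= c -> continuity_pt h t) ->
  (forall x y, 0 < x -> x < y -> y <= c -> h x < h y) ->
  exists B, 0 < B < c /\ (forall u, 0 < u < B -> h u < 0) /\
            (forall u, B < u <= c -> 0 < h u).
Proof.
  intros Hx0 Hx0c Hneg Hpos Hcont Hinc.
  destruct (IVT_interv h x0 c Hcont Hx0c Hneg Hpos) as [B [[HxB HBc] HhB]].
  assert (HBc' : B < c) by (destruct (Req_dec B c) as [->|]; lra).
  exists B; split; [lra|]; split.
  - intros u Hu; rewrite <- HhB; apply Hinc; lra.
  - intros u Hu; rewrite <- HhB; apply Hinc; lra.
Qed.

Lemma increasing_of_deriv (h h' : R -> R) (x y : R) : x < y ->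
  (forall t, x <= t <= y -> derivable_pt_lim h t (h' t)) ->
  (forall t, x < t < y -> 0 < h' t) -> h x < h y.
Proof.
  intros Hxy Hder Hpos.
  destruct (MVT_cor2 h h' x y Hxy Hder) as [t [Heq Ht]].
  pose proof (Hpos t Ht); nra.
Qed.

Lemma decreasing_of_deriv (h h' : R -> R) (x y : R) : x < y ->
  (forall t, x <= t <= y -> derivable_pt_lim h t (h' t)) ->
  (forall t, x < t < y -> h' t < 0) -> h y < h x.
Proof.
  intros Hxy Hder Hneg.
  destruct (MVT_cor2 h h' x y Hxy Hder) as [t [Heq Ht]].
  pose proof (Hneg t Ht); nra.
Qed.

Lemma pos_factor_sign (k x : R) : 0 < k -> (x < 0 -> k * x < 0) /\ (0 < x -> 0 < k * x).
Proof. intros Hk; split; intros Hx; nra. Qed.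

Lemma Rpower_pos (x e : R) : 0 < Rpower x e.
Proof. apply exp_pos. Qed.

Lemma Rpower_inv_exponent (x e : R) : 0 < x -> e <> 0 -> Rpower (Rpower x (1 / e)) e = x.
Proof.
  intros Hx He; rewrite Rpower_mult.
  replace (1 / e * e) with 1 by (field; exact He).
  now apply Rpower_1.
Qed.

Lemma Rpower_antitone_exponent (x e1 e2 : R) : 0 < x <= 1 -> e1 <= e2 ->
  Rpower x e2 <= Rpower x e1.
Proof.
  intros Hx He.
  replace e2 with (e1 + (e2 - e1)) by ring; rewrite Rpower_plus.
  assert (Hle1 : Rpower x (e2 - e1) <= 1).
  { replace 1 with (Rpower 1 (e2 - e1))
      by (unfold Rpower; rewrite ln_1, Rmult_0_r; apply exp_0).
    apply Rle_Rpower_l; lra. }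
  pose proof (Rpower_pos x e1); nra.
Qed.

Lemma Rpower_small (e eps c : R) : 0 < e -> 0 < eps -> 0 < c ->
  exists x, 0 < x < c /\ x <= 1 /\ Rpower x e <= eps.
Proof.
  intros He Heps Hc.
  set (r := Rpower eps (1 / e)).
  assert (Hr : 0 < r) by apply Rpower_pos.
  exists (Rmin (c / 2) (Rmin 1 r)).
  assert (H1 := Rmin_l (c / 2) (Rmin 1 r)).
  assert (H2 := Rmin_r (c / 2) (Rmin 1 r)).
  assert (H3 := Rmin_l 1 r). assert (H4 := Rmin_r 1 r).
  assert (Hpos : 0 < Rmin (c / 2) (Rmin 1 r))
    by (apply Rmin_glb_lt; [lra | apply Rmin_glb_lt; lra]).
  split; [lra|]; split; [lra|].
  rewrite <- (Rpower_inv_exponent eps e) by lra; fold r.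
  apply Rle_Rpower_l; lra.
Qed.

Section SigmaAnalysis.

Variables (n : nat) (omega p q : R).
Hypotheses (Hp : 1 < p) (Hpq : p < q) (Homega : 0 < omega).

(* The coefficient of u^(r+1) in Sigma, for r = p and r = q. *)
Definition sigma_coef (r : R) : R := 2 * INR n / (r + 1) - (INR n - 2).

Definition G (u : R) : R :=
  - 2 * omega + sigma_coef p * Rpower u (p - 1) - sigma_coef q * Rpower u (q - 1).

(* Phi(u) = u^(-(q+1)) Sigma(u): the normalization with a unimodal shape. *)
Definition Phi (u : R) : R :=
  - 2 * omega * Rpower u (1 - q) + sigma_coef p * Rpower u (p - q) - sigma_coef q.

Definition D (u : R) : R :=
  2 * omega * (q - 1) - sigma_coef p * (q - p) * Rpower u (p - 1).

Lemma Sigma_Phi (u : R) : 0 < u -> Sigma n omega p q u = Rpower u (q + 1) * Phi u.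
Proof.
  intros Hu.
  assert (Hshift : forall e, Rpower u (e + 1) = u * Rpower u e).
  { intros e; rewrite Rpower_plus, Rpower_1 by exact Hu; ring. }
  assert (Hsq : Rpower u (q + 1) * Rpower u (1 - q) = u ^ 2).
  { rewrite <- Rpower_plus, <- Rpower_pow by exact Hu.
    f_equal; rewrite S_INR, INR_1; ring. }
  assert (Hp1 : Rpower u (q + 1) * Rpower u (p - q) = Rpower u (p + 1)).
  { rewrite <- Rpower_plus; f_equal; ring. }
  transitivity (- 2 * omega * u ^ 2 + sigma_coef p * Rpower u (p + 1)
                - sigma_coef q * Rpower u (q + 1)).
  - unfold Sigma, F_nl, f_nl, sigma_coef; rewrite !Hshift; field; lra.
  - rewrite <- Hsq, <- Hp1; unfold Phi; ring.
Qed.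

Lemma Phi_G (u : R) : 0 < u -> Phi u = Rpower u (1 - q) * G u.
Proof.
  intros Hu; unfold Phi, G.
  assert (Hinv : Rpower u (1 - q) * Rpower u (q - 1) = 1).
  { rewrite <- Rpower_plus; replace (1 - q + (q - 1)) with 0 by ring.
    now apply Rpower_O. }
  replace (p - q) with ((1 - q) + (p - 1)) by ring; rewrite Rpower_plus.
  transitivity (- 2 * omega * Rpower u (1 - q)
     + sigma_coef p * (Rpower u (1 - q) * Rpower u (p - 1))
     - sigma_coef q * (Rpower u (1 - q) * Rpower u (q - 1))); [rewrite Hinv|]; ring.
Qed.

Lemma Phi_derivative (x : R) : 0 < x ->
  derivable_pt_lim Phi x (Rpower x (- q) * D x).
Proof.
  intros Hx.
  assert (Hd := derivable_pt_lim_minus _ _ x _ _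
    (derivable_pt_lim_plus _ _ x _ _
      (derivable_pt_lim_scal _ (- 2 * omega) x _ (derivable_pt_lim_power x (1 - q) Hx))
      (derivable_pt_lim_scal _ (sigma_coef p) x _ (derivable_pt_lim_power x (p - q) Hx)))
    (derivable_pt_lim_const (sigma_coef q) x)).
  replace (Rpower x (- q) * D x) with
    (- 2 * omega * ((1 - q) * Rpower x (1 - q - 1))
     + sigma_coef p * ((p - q) * Rpower x (p - q - 1)) - 0).
  - exact Hd.
  - unfold D; replace (1 - q - 1) with (- q) by ring.
    replace (p - q - 1) with (- q + (p - 1)) by ring.
    rewrite Rpower_plus; ring.
Qed.

Lemma Phi_increasing (x y : R) : 0 < x -> x < y ->
  (forall t, x < t < y -> 0 < D t) -> Phi x < Phi y.
Proof.
  intros Hx Hxy HD.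
  apply (increasing_of_deriv Phi (fun t => Rpower t (- q) * D t)); [exact Hxy | |].
  - intros t Ht; apply Phi_derivative; lra.
  - intros t Ht; apply Rmult_lt_0_compat; [apply Rpower_pos | now apply HD].
Qed.

Lemma Phi_decreasing (x y : R) : 0 < x -> x < y ->
  (forall t, x < t < y -> D t < 0) -> Phi y < Phi x.
Proof.
  intros Hx Hxy HD.
  apply (decreasing_of_deriv Phi (fun t => Rpower t (- q) * D t)); [exact Hxy | |].
  - intros t Ht; apply Phi_derivative; lra.
  - intros t Ht; apply Rmult_pos_neg; [apply Rpower_pos | now apply HD].
Qed.

Lemma D_pos_of_coef_nonpos (t : R) : sigma_coef p <= 0 -> 0 < D t.
Proof.
  intros Ha; unfold D; pose proof (Rpower_pos t (p - 1)).
  assert (0 <= - sigma_coef p * (q - p) * Rpower t (p - 1))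
    by (apply Rmult_le_pos; [apply Rmult_le_pos|]; lra).
  nra.
Qed.

Lemma D_sign_of_coef_pos : 0 < sigma_coef p ->
  exists u1, 0 < u1 /\ (forall t, 0 < t < u1 -> 0 < D t) /\ (forall t, u1 < t -> D t < 0).
Proof.
  intros Ha.
  set (K1 := 2 * omega * (q - 1) / (sigma_coef p * (q - p))).
  assert (HK1 : 0 < K1)
    by (apply Rdiv_lt_0_compat; [nra | apply Rmult_lt_0_compat; lra]).
  assert (HD : forall t, D t = sigma_coef p * (q - p) * (K1 - Rpower t (p - 1)))
    by (intros t; unfold D, K1; field; split; lra).
  assert (Hapq : 0 < sigma_coef p * (q - p)) by (apply Rmult_lt_0_compat; lra).
  exists (Rpower K1 (1 / (p - 1))).
  split; [apply Rpower_pos | split]; intros t Ht; rewrite HD.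
  - assert (Rpower t (p - 1) < K1); [|nra].
    rewrite <- (Rpower_inv_exponent K1 (p - 1)) by lra.
    apply Rlt_Rpower_l; lra.
  - assert (K1 < Rpower t (p - 1)); [|nra].
    rewrite <- (Rpower_inv_exponent K1 (p - 1)) at 1 by lra.
    pose proof (Rpower_pos K1 (1 / (p - 1))).
    apply Rlt_Rpower_l; lra.
Qed.

Lemma Phi_increasing_to_positive (s : R) : 0 < s -> 0 < Phi s ->
  exists c, 0 < c /\ 0 < Phi c /\
    (forall x y, 0 < x -> x < y -> y <= c -> Phi x < Phi y).
Proof.
  intros Hs HPhis.
  destruct (Rle_dec (sigma_coef p) 0) as [Ha|Ha].
  { exists s; split; [exact Hs | split; [exact HPhis|]].
    intros x y Hx Hxy _; apply Phi_increasing; [exact Hx | exact Hxy |].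
    intros t _; now apply D_pos_of_coef_nonpos. }
  destruct (D_sign_of_coef_pos ltac:(lra)) as [u1 [Hu1 [HDpos HDneg]]].
  destruct (Rle_dec s u1) as [Hsu1|Hsu1].
  - exists s; split; [exact Hs | split; [exact HPhis|]].
    intros x y Hx Hxy Hy; apply Phi_increasing; [exact Hx | exact Hxy |].
    intros t Ht; apply HDpos; lra.
  - exists u1; split; [exact Hu1 | split].
    + assert (Phi s < Phi u1); [|lra].
      apply Phi_decreasing; [lra | lra |]. intros t Ht; apply HDneg; lra.
    + intros x y Hx Hxy Hy; apply Phi_increasing; [exact Hx | exact Hxy |].
      intros t Ht; apply HDpos; lra.
Qed.

(* Near 0 the term -2 omega dominates, so G < 0 there. *)
Lemma G_negative_near_zero (c : R) : 0 < c -> exists x, 0 < x < c /\ G x < 0.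
Proof.
  intros Hc.
  set (M := Rabs (sigma_coef p) + Rabs (sigma_coef q) + 1).
  assert (HM : 0 < M)
    by (unfold M; pose proof (Rabs_pos (sigma_coef p)); pose proof (Rabs_pos (sigma_coef q)); lra).
  destruct (Rpower_small (p - 1) (omega / M) c) as [x [Hx [Hx1 HX]]];
    [lra | apply Rdiv_lt_0_compat; lra | exact Hc |].
  exists x; split; [exact Hx|].
  assert (Hqp : Rpower x (q - 1) <= Rpower x (p - 1))
    by (apply Rpower_antitone_exponent; lra).
  assert (HMX : M * Rpower x (p - 1) <= omega).
  { replace omega with (M * (omega / M)) by (field; lra).
    apply Rmult_le_compat_l; lra. }
  assert (Ha : sigma_coef p * Rpower x (p - 1) <= Rabs (sigma_coef p) * Rpower x (p - 1))
    by (apply Rmult_le_compat_r; [apply Rlt_le, Rpower_pos | apply Rle_abs]).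
  assert (Hb : - sigma_coef q * Rpower x (q - 1) <= Rabs (sigma_coef q) * Rpower x (p - 1)).
  { apply Rle_trans with (Rabs (sigma_coef q) * Rpower x (q - 1)).
    - apply Rmult_le_compat_r; [apply Rlt_le, Rpower_pos|].
      rewrite <- Rabs_Ropp; apply Rle_abs.
    - apply Rmult_le_compat_l; [apply Rabs_pos | exact Hqp]. }
  pose proof (Rpower_pos x (p - 1)).
  unfold G, M in *; lra.
Qed.

(* The hypothesis omega < omega_{p,q} says exactly that G(u0) > 0 for
   u0 = K^(1/(q-p)): there G(u0) = 2 (omega_{p,q} - omega). *)
Lemma G_positive_at_critical_point : omega < omega_pq p q ->
  0 < G (Rpower ((p - 1) * (q + 1) / ((p + 1) * (q - 1))) (1 / (q - p))).
Proof.
  intros Hw.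
  set (K := (p - 1) * (q + 1) / ((p + 1) * (q - 1))) in *.
  assert (HK : 0 < K) by (apply Rdiv_lt_0_compat; apply Rmult_lt_0_compat; lra).
  set (P := Rpower K ((p - 1) / (q - p))).
  assert (E1 : Rpower (Rpower K (1 / (q - p))) (p - 1) = P).
  { unfold P; rewrite Rpower_mult; f_equal; field; lra. }
  assert (E2 : Rpower (Rpower K (1 / (q - p))) (q - 1) = P * K).
  { replace (q - 1) with ((p - 1) + (q - p)) by ring.
    rewrite Rpower_plus, E1, Rpower_inv_exponent by lra. reflexivity. }
  assert (Hab : sigma_coef p - sigma_coef q * K = 4 * (q - p) / ((p + 1) * (q - 1)))
    by (unfold sigma_coef, K; field; repeat split; lra).
  unfold omega_pq in Hw; fold K P in Hw.
  unfold G; rewrite E1, E2.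
  replace (- 2 * omega + sigma_coef p * P - sigma_coef q * (P * K))
    with (- 2 * omega + P * (sigma_coef p - sigma_coef q * K)) by ring.
  rewrite Hab.
  replace (P * (4 * (q - p) / ((p + 1) * (q - 1))))
    with (2 * (2 * (q - p) / ((p + 1) * (q - 1)) * P)) by (field; lra).
  lra.
Qed.

End SigmaAnalysis.

Theorem theorem1 (n : nat) (p q omega : R) :
  1 < p -> p < q -> 0 < omega -> omega < omega_pq p q ->
  exists B : R, 0 < B /\
    (forall u, 0 < u < B -> Sigma n omega p q u < 0) /\
    ((exists C : R, B < C /\ forall u, B < u < C -> Sigma n omega p q u > 0) \/
     (forall u, B < u -> Sigma n omega p q u > 0)).
Proof.
  intros Hp Hpq Homega Hw.
  set (s := Rpower ((p - 1) * (q + 1) / ((p + 1) * (q - 1))) (1 / (q - p))).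
  assert (Hs : 0 < s) by apply Rpower_pos.
  assert (HPhis : 0 < Phi n omega p q s).
  { rewrite Phi_G by exact Hs.
    apply pos_factor_sign; [apply Rpower_pos|].
    now apply G_positive_at_critical_point. }
  destruct (Phi_increasing_to_positive n omega p q Hp Hpq Homega s Hs HPhis)
    as [c [Hc [HPhic Hinc]]].
  destruct (G_negative_near_zero n omega p q Hp Hpq Homega c Hc) as [x0 [Hx0 HGx0]].
  assert (HPhix0 : Phi n omega p q x0 < 0).
  { rewrite Phi_G by lra. apply pos_factor_sign; [apply Rpower_pos | exact HGx0]. }
  assert (HPhicont : forall t, x0 <= t <= c -> continuity_pt (Phi n omega p q) t).
  { intros t Ht; apply derivable_continuous_pt.
    exists (Rpower t (- q) * D n omega p q t); apply Phi_derivative; lra. }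
  destruct (increasing_sign_change (Phi n omega p q) x0 c (proj1 Hx0) (proj2 Hx0)
              HPhix0 HPhic HPhicont Hinc) as [B [HB [Hbelow Habove]]].
  exists B; split; [lra | split].
  - intros u Hu; rewrite Sigma_Phi by lra.
    apply pos_factor_sign; [apply Rpower_pos | now apply Hbelow].
  - left; exists c; split; [lra|].
    intros u Hu; rewrite Sigma_Phi by lra.
    apply pos_factor_sign; [apply Rpower_pos | apply Habove; lra].
Qed.
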